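(* Let $f_1=k_1\in\mathbb R\setminus\{0\}$, let $f_2=f_2(x^1)$ be a smooth nowhere-vanishing function depending only on $x^1$, let $f_3=k_3\in\mathbb R\setminus\{0\}$, and $g=\frac{1}{k_1^2}dx^1\otimes dx^1+\frac{1}{f_2^2}dx^2\otimes dx^2+\frac{1}{k_3^2}dx^3\otimes dx^3$. Let $F_0$ satisfy $F_0'=-\frac{f_2^2}{k_1}$. Then $V=\sum_{k=1}^3V^kE_k$, with $E_i=f_i\frac{\partial}{\partial x^i}$, is a Killing vector field of $(\mathbb R^3,g)$ if and only if one of the following holds: (i) $V^1=0$, $V^2(x^1)=\frac{c_1}{f_2(x^1)}$, $V^3=c_2$, with $c_1,c_2\in\mathbb R$; (ii) $f_2=k_2$ is constant and $V^1(x^2,x^3)=c_1x^2+c_2x^3+c_3$, $V^2(x^1,x^3)=-\frac{c_1k_2}{k_1}x^1-c_4k_2x^3+c_5$, $V^3(x^1,x^2)=-\frac{c_2k_3}{k_1}x^1+c_4k_3x^2+c_6$, with $c_1,\dots,c_6\in\mathbb R$; (iii) $f_2(x^1)=a_1e^{a_2x^1}$ with $a_1,a_2\in\mathbb R\setminus\{0\}$, and $V^1(x^2)=c_1x^2+c_2$, $V^2(x^1,x^2)=k_1\left(\frac{f_2'}{f_2^2}\right)(x^1)\left[\frac{c_1}{2}(x^2)^2+c_2x^2+c_3\right]+\frac{c_1F_0(x^1)+c_4}{f_2(x^1)}$, $V^3=c_3$, with $c_1,\dots,c_4\in\mathbb R$; (iv) the function $k:=\frac{k_1^2}{f_2^2}\left(\frac{f_2'}{f_2}\right)'$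 is a constant in $(0,+\infty)$, and $V^1(x^2)=c_1\cos(\sqrt{k}x^2)+c_2\sin(\sqrt{k}x^2)$, $V^2(x^1,x^2)=k_1\left(\frac{f_2'}{f_2^2}\right)(x^1)\left[\frac{1}{\sqrt{k}}\big(c_1\sin(\sqrt{k}x^2)-c_2\cos(\sqrt{k}x^2)\big)+c_3\right]+\frac{c_3kF_0(x^1)+c_4}{f_2(x^1)}$, $V^3=c_3$, with $c_1,\dots,c_4\in\mathbb R$; (v) the function $k:=\frac{k_1^2}{f_2^2}\left(\frac{f_2'}{f_2}\right)'$ is a constant in $(-\infty,0)$, and $V^1(x^2)=c_1e^{\sqrt{-k}x^2}+c_2e^{-\sqrt{-k}x^2}$, $V^2(x^1,x^2)=k_1\left(\frac{f_2'}{f_2^2}\right)(x^1)\left[\frac{1}{\sqrt{-k}}\big(c_1e^{\sqrt{-k}x^2}-c_2e^{-\sqrt{-k}x^2}\big)+c_3\right]+\frac{c_3kF_0(x^1)+c_4}{f_2(x^1)}$, $V^3=c_3$, with $c_1,\dots,c_4\in\mathbb R$.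
   Context: $x^1,x^2,x^3$ are the standard coordinates on $\mathbb R^3$; a prime denotes the derivative with respect to $x^1$; $V^k$ are smooth functions and writing $h(x^i)$ or $h(x^i,x^j)$ means $h$ depends only on those variables. A vector field $V$ is Killing if $\mathcal L_Vg=0$. *)

From Stdlib Require Import Reals.
From Coquelicot Require Import Coquelicot.
Open Scope R_scope.

Inductive idx := i1 | i2 | i3.

Definition fn3 := R -> R -> R -> R.

Definition partial (i : idx) (f : fn3) : fn3 := fun x y z =>
  match i with
  | i1 => Derive (fun t => f t y z) x
  | i2 => Derive (fun t => f x t z) y
  | i3 => Derive (fun t => f x y t) z
  end.

Definition ex_partial (i : idx) (f : fn3) (x y z : R) : Prop :=
  match i with
  | i1 => ex_derive (fun t => f t y z) x
  | i2 => ex_derive (fun t => f x t z) y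
  | i3 => ex_derive (fun t => f x y t) z
  end.

Definition continuous3 (f : fn3) : Prop :=
  forall x y z : R,
    continuous (fun p : R * R * R => f (fst (fst p)) (snd (fst p)) (snd p)) (x, y, z).

Fixpoint Ck (n : nat) (f : fn3) : Prop :=
  match n with
  | O => continuous3 f
  | S m => continuous3 f /\ (forall i x y z, ex_partial i f x y z)
           /\ (forall i, Ck m (partial i f))
  end.

Definition smooth3 (f : fn3) : Prop := forall n, Ck n f.

Definition smooth1 (f : R -> R) : Prop := forall n x, ex_derive_n f n x.

Definition sum3 (F : idx -> R) : R := F i1 + F i2 + F i3.

Definition lie_deriv (g : idx -> idx -> fn3) (W : idx -> fn3) (i j : idx) : fn3 :=
  fun x y z => sum3 (fun k =>
      W k x y z * partial k (g i j) x y z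
    + g k j x y z * partial i (W k) x y z
    + g i k x y z * partial j (W k) x y z).

Definition Killing (g : idx -> idx -> fn3) (W : idx -> fn3) : Prop :=
  forall i j x y z, lie_deriv g W i j x y z = 0.

Definition metric_g (k1 k3 : R) (f2 : R -> R) : idx -> idx -> fn3 :=
  fun i j => match i, j with
  | i1, i1 => fun _ _ _ => 1 / k1 ^ 2
  | i2, i2 => fun x _ _ => 1 / (f2 x) ^ 2
  | i3, i3 => fun _ _ _ => 1 / k3 ^ 2
  | _, _ => fun _ _ _ => 0
  end.

(* Coordinate components of V = V^1 E_1 + V^2 E_2 + V^3 E_3, E_i = f_i d/dx^i,
   with f_1 = k1, f_2 = f2(x^1), f_3 = k3. *)
Definition frame_field (k1 k3 : R) (f2 : R -> R) (V1 V2 V3 : fn3) : idx -> fn3 :=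
  fun k => match k with
  | i1 => fun x y z => k1 * V1 x y z
  | i2 => fun x y z => f2 x * V2 x y z
  | i3 => fun x y z => k3 * V3 x y z
  end.

(* The Killing equations form six first-order PDEs for V1, V2, V3.  They force
   V1 = alpha(y) z + gamma(y), V3 = -(k3/k1) alpha(y) x + beta(y) and V2 affine in z; computing the
   x-derivative of f2^2 dV2/dz in two ways shows that alpha is constant and f2' beta' = 0.
   If f2 is constant everything integrates to the six-parameter family (ii).  Otherwise alpha = 0,
   beta is constant, and with G the primitive of gamma the remaining system separates:
   V2 = k1 (f2'/f2^2) G(y) + psi(x)/f2 and k(x) G(y) = gamma'(0) - gamma'(y), where
   k = (k1^2/f2^2) (f2'/f2)'.  Either G = 0, giving (i), or k is constant and gamma'' = -k gamma,
   whose solutions for k = 0, k > 0 and k < 0 give (iii), (iv) and (v). *)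

From Stdlib Require Import Reals Lra Psatz Classical FunctionalExtensionality.
From Coquelicot Require Import Coquelicot.
Open Scope R_scope.

(* [auto_derive] and Coquelicot's extensionality lemmas leave eta-expanded [Derive]s and
   equalities in the carrier of [R_AbsRing]; both hide the goal from [ring] and [field]. *)
Ltac as_R_eq :=
  repeat match goal with
  |- context [Derive (fun t => ?f t) ?x] => change (Derive (fun t => f t) x) with (Derive f x) end;
  match goal with |- @eq _ ?a ?b => change (@eq R a b) end.

Ltac neq0 :=
  unfold Rdiv;
  repeat (apply Rmult_integral_contrapositive_currified || apply Ropp_neq_0_compat
          || apply Rinv_neq_0_compat || apply pow_nonzero || apply Rgt_not_eq, exp_pos);
  auto; lra.

Ltac derive_side :=
  repeat split; try exact I; try assumption; try solve [eexists; eauto]; try neq0.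

Lemma is_derive_0_constant (f : R -> R) :
  (forall t, is_derive f t 0) -> forall t, f t = f 0.
Proof.
  intros Hf t. destruct (Rtotal_order t 0) as [Ht | [-> | Ht]]; [| reflexivity |].
  - apply (eq_is_derive f t 0); [intros s _; apply Hf | exact Ht].
  - symmetry; apply (eq_is_derive f 0 t); [intros s _; apply Hf | exact Ht].
Qed.

Lemma is_derive_same_shift (f g h : R -> R) :
  (forall t, is_derive f t (h t)) -> (forall t, is_derive g t (h t)) ->
  forall t, f t = g t + (f 0 - g 0).
Proof.
  intros Hf Hg t.
  assert (Hc : forall t, is_derive (fun s => f s - g s) t 0).
  { intros s. replace 0 with (h s - h s) by ring. apply (is_derive_minus f g); auto. }
  pose proof (is_derive_0_constant _ Hc t). simpl in *. lra.
Qed.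

Lemma is_derive_affine (f : R -> R) (c : R) :
  (forall t, is_derive f t c) -> forall t, f t = c * t + f 0.
Proof.
  intros Hf t.
  assert (Hl : forall t, is_derive (fun s => c * s) t c).
  { intros s. auto_derive; [exact I | ring]. }
  rewrite (is_derive_same_shift f _ _ Hf Hl t). ring.
Qed.

Lemma Derive_affine (f : R -> R) (c : R) :
  (forall t, ex_derive f t) -> (forall t, Derive f t = c) -> forall t, f t = c * t + f 0.
Proof.
  intros Hf Hc. apply is_derive_affine. intros t. rewrite <- (Hc t). now apply Derive_correct.
Qed.

Lemma is_derive_proportional_exp (f : R -> R) (a : R) :
  (forall t, is_derive f t (a * f t)) -> forall t, f t = f 0 * exp (a * t).
Proof.
  intros Hf t.
  assert (Hc : forall t, is_derive (fun t => f t * exp (- (a * t))) t 0).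
  { intros s. auto_derive; [derive_side |].
    as_R_eq. rewrite (is_derive_unique _ _ _ (Hf s)). ring. }
  pose proof (is_derive_0_constant _ Hc t) as E. simpl in E.
  rewrite Rmult_0_r, Ropp_0, exp_0, Rmult_1_r in E. rewrite <- E, Rmult_assoc, <- exp_plus.
  replace (- (a * t) + a * t) with 0 by ring. rewrite exp_0. ring.
Qed.

Lemma oscillator_zero (k : R) (g g1 : R -> R) : 0 < k ->
  (forall y, is_derive g y (g1 y)) -> (forall y, is_derive g1 y (- k * g y)) ->
  g 0 = 0 -> g1 0 = 0 -> forall y, g y = 0 /\ g1 y = 0.
Proof.
  intros Hk Hg Hg1 H0 H1 y.
  assert (Henergy : forall t, is_derive (fun t => g1 t ^ 2 + k * g t ^ 2) t 0).
  { intros t. auto_derive; [derive_side |].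
    as_R_eq. rewrite (is_derive_unique _ _ _ (Hg t)), (is_derive_unique _ _ _ (Hg1 t)). ring. }
  pose proof (is_derive_0_constant _ Henergy y) as E. simpl in E. rewrite H0, H1 in E.
  assert (g y * g y = 0) by nra. assert (g1 y * g1 y = 0) by nra.
  split; nra.
Qed.

Lemma oscillator_solution (k : R) (g g1 : R -> R) : 0 < k ->
  (forall y, is_derive g y (g1 y)) -> (forall y, is_derive g1 y (- k * g y)) ->
  forall y,
    g y = g 0 * cos (sqrt k * y) + g1 0 / sqrt k * sin (sqrt k * y) /\
    g1 y = - g 0 * sqrt k * sin (sqrt k * y) + g1 0 * cos (sqrt k * y).
Proof.
  intros Hk Hg Hg1 y.
  assert (Hs : sqrt k * sqrt k = k) by (apply sqrt_sqrt; lra).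
  assert (Hs0 : 0 < sqrt k) by (apply sqrt_lt_R0; lra).
  set (s := sqrt k) in *. clearbody s. subst k.
  set (c2 := g1 0 / s).
  assert (Hzero : forall t,
    g t - (g 0 * cos (s * t) + c2 * sin (s * t)) = 0 /\
    g1 t - (- g 0 * s * sin (s * t) + g1 0 * cos (s * t)) = 0).
  { apply (oscillator_zero (s * s)
      (fun t => g t - (g 0 * cos (s * t) + c2 * sin (s * t)))
      (fun t => g1 t - (- g 0 * s * sin (s * t) + g1 0 * cos (s * t)))); [nra | | | |].
    - intros t. auto_derive; [derive_side |].
      as_R_eq. rewrite (is_derive_unique _ _ _ (Hg t)). unfold c2. field. lra.
    - intros t. auto_derive; [derive_side |].
      as_R_eq. rewrite (is_derive_unique _ _ _ (Hg1 t)). unfold c2. field. lra.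
    - rewrite Rmult_0_r, cos_0, sin_0. ring.
    - rewrite Rmult_0_r, cos_0, sin_0. ring. }
  destruct (Hzero y). split; lra.
Qed.

Lemma antioscillator_zero (s : R) (g g1 : R -> R) : 0 < s ->
  (forall y, is_derive g y (g1 y)) -> (forall y, is_derive g1 y (s * s * g y)) ->
  g 0 = 0 -> g1 0 = 0 -> forall y, g y = 0 /\ g1 y = 0.
Proof.
  intros Hs Hg Hg1 H0 H1.
  (* the factorisation g'' - s^2 g = (d/dy + s)(d/dy - s) g *)
  assert (Hu : forall t, is_derive (fun t => (g1 t - s * g t) * exp (s * t)) t 0).
  { intros t. auto_derive; [derive_side |].
    as_R_eq. rewrite (is_derive_unique _ _ _ (Hg t)), (is_derive_unique _ _ _ (Hg1 t)). ring. }
  assert (Hg1s : forall t, g1 t = s * g t).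
  { intros t. pose proof (is_derive_0_constant _ Hu t) as E. simpl in E.
    rewrite H0, H1 in E. pose proof (exp_pos (s * t)). nra. }
  assert (Hv : forall t, is_derive (fun t => g t * exp (- (s * t))) t 0).
  { intros t. auto_derive; [derive_side |].
    as_R_eq. rewrite (is_derive_unique _ _ _ (Hg t)), Hg1s. ring. }
  intros y. rewrite Hg1s. pose proof (is_derive_0_constant _ Hv y) as E. simpl in E.
  rewrite H0 in E. pose proof (exp_pos (- (s * y))). split; nra.
Qed.

Lemma antioscillator_solution (k : R) (g g1 : R -> R) : k < 0 ->
  (forall y, is_derive g y (g1 y)) -> (forall y, is_derive g1 y (- k * g y)) ->
  let s := sqrt (- k) in
  let c1 := (g 0 + g1 0 / s) / 2 in
  let c2 := (g 0 - g1 0 / s) / 2 in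
  forall y,
    g y = c1 * exp (s * y) + c2 * exp (- (s * y)) /\
    g1 y = s * (c1 * exp (s * y) - c2 * exp (- (s * y))).
Proof.
  intros Hk Hg Hg1 s c1 c2 y.
  assert (Hs : s * s = - k) by (apply sqrt_sqrt; lra).
  assert (Hs0 : 0 < s) by (apply sqrt_lt_R0; lra).
  assert (Hzero : forall t,
    g t - (c1 * exp (s * t) + c2 * exp (- (s * t))) = 0 /\
    g1 t - s * (c1 * exp (s * t) - c2 * exp (- (s * t))) = 0).
  { apply (antioscillator_zero s
      (fun t => g t - (c1 * exp (s * t) + c2 * exp (- (s * t))))
      (fun t => g1 t - s * (c1 * exp (s * t) - c2 * exp (- (s * t))))); [lra | | | |].
    - intros t. auto_derive; [derive_side |].
      as_R_eq. rewrite (is_derive_unique _ _ _ (Hg t)). ring.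
    - intros t. auto_derive; [derive_side |].
      as_R_eq. rewrite (is_derive_unique _ _ _ (Hg1 t)). replace k with (- (s * s)) by lra. ring.
    - rewrite Rmult_0_r, Ropp_0, exp_0. unfold c1, c2. field. lra.
    - rewrite Rmult_0_r, Ropp_0, exp_0. unfold c1, c2. field. lra. }
  destruct (Hzero y). split; lra.
Qed.

Set Implicit Arguments.

Record killing_system (k1 k3 : R) (f2 : R -> R) (V1 V2 V3 : fn3) : Prop := {
  killing11 : forall x y z, Derive (fun t => V1 t y z) x = 0;
  killing33 : forall x y z, Derive (V3 x y) z = 0;
  killing22 : forall x y z,
    Derive (fun t => V2 x t z) y = k1 * V1 x y z * Derive f2 x / f2 x ^ 2;
  killing12 : forall x y z,
    Derive (fun t => f2 t * V2 t y z) x = - (f2 x ^ 2 / k1) * Derive (fun t => V1 x t z) y;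
  killing13 : forall x y z,
    Derive (fun t => V3 t y z) x = - (k3 / k1) * Derive (V1 x y) z;
  killing23 : forall x y z,
    Derive (V2 x y) z = - (f2 x / k3) * Derive (fun t => V3 x t z) y }.

Unset Implicit Arguments.

Lemma eq_of_scaled_diff (a b c e : R) : c <> 0 -> c * (a - b) = e -> e = 0 -> a = b.
Proof. intros Hc He ->. apply Rmult_integral in He as [H | H]; lra. Qed.

Ltac unfold_lie Hg22 := unfold lie_deriv, sum3, metric_g, frame_field, partial; simpl;
  rewrite ?Derive_const, ?Hg22, ?Derive_scal.

Lemma Killing_frame_iff (k1 k3 : R) (f2 : R -> R) (V1 V2 V3 : fn3) :
  k1 <> 0 -> k3 <> 0 -> (forall x, ex_derive f2 x) -> (forall x, f2 x <> 0) ->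
  Killing (metric_g k1 k3 f2) (frame_field k1 k3 f2 V1 V2 V3) <->
  killing_system k1 k3 f2 V1 V2 V3.
Proof.
  intros Hk1 Hk3 Hf2 Hnz.
  assert (Hg22 : forall x,
    Derive (fun t => 1 / (f2 t * (f2 t * 1))) x = - 2 * Derive f2 x / f2 x ^ 3).
  { intros x. apply is_derive_unique. auto_derive.
    - specialize (Hnz x). repeat split; auto.
    - change (fun t => f2 t) with f2. field. auto. }
  split.
  - intros HK. constructor; intros x y z; specialize (Hnz x).
    + refine (eq_of_scaled_diff _ _ (2 / k1) _ ltac:(neq0) _ (HK i1 i1 x y z));
      unfold_lie Hg22; field; auto.
    + refine (eq_of_scaled_diff _ _ (2 / k3) _ ltac:(neq0) _ (HK i3 i3 x y z));
      unfold_lie Hg22; field; auto.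
    + refine (eq_of_scaled_diff _ _ (2 / f2 x) _ ltac:(neq0) _ (HK i2 i2 x y z));
      unfold_lie Hg22; field; auto.
    + refine (eq_of_scaled_diff _ _ (/ f2 x ^ 2) _ ltac:(neq0) _ (HK i1 i2 x y z));
      unfold_lie Hg22; field; auto.
    + refine (eq_of_scaled_diff _ _ (/ k3) _ ltac:(neq0) _ (HK i1 i3 x y z));
      unfold_lie Hg22; field; auto.
    + refine (eq_of_scaled_diff _ _ (/ f2 x) _ ltac:(neq0) _ (HK i2 i3 x y z));
      unfold_lie Hg22; field; auto.
  - intros [H11 H33 H22 H12 H13 H23] i j x y z. specialize (Hnz x).
    destruct i, j; unfold_lie Hg22; rewrite ?H11, ?H33, ?H22, ?H12, ?H13, ?H23; field; auto.
Qed.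

Definition killing_case_i (f2 : R -> R) (V1 V2 V3 : fn3) : Prop :=
  exists c1 c2 : R, forall x y z,
    V1 x y z = 0 /\ V2 x y z = c1 / f2 x /\ V3 x y z = c2.

Definition killing_case_ii (k1 k3 : R) (f2 : R -> R) (V1 V2 V3 : fn3) : Prop :=
  exists k2 : R, (forall x, f2 x = k2) /\
  exists c1 c2 c3 c4 c5 c6 : R, forall x y z,
    V1 x y z = c1 * y + c2 * z + c3 /\
    V2 x y z = - (c1 * k2 / k1) * x - c4 * k2 * z + c5 /\
    V3 x y z = - (c2 * k3 / k1) * x + c4 * k3 * y + c6.

Definition killing_case_iii (k1 : R) (f2 F0 : R -> R) (V1 V2 V3 : fn3) : Prop :=
  exists a1 a2 : R, a1 <> 0 /\ a2 <> 0 /\ (forall x, f2 x = a1 * exp (a2 * x)) /\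
  exists c1 c2 c3 c4 : R, forall x y z,
    V1 x y z = c1 * y + c2 /\
    V2 x y z = k1 * (Derive f2 x / (f2 x) ^ 2) * (c1 / 2 * y ^ 2 + c2 * y + c3)
               + (c1 * F0 x + c4) / f2 x /\
    V3 x y z = c3.

Definition killing_case_iv (k1 : R) (f2 F0 : R -> R) (V1 V2 V3 : fn3) : Prop :=
  exists k : R, 0 < k /\
  (forall x, k1 ^ 2 / (f2 x) ^ 2 * Derive (fun t => Derive f2 t / f2 t) x = k) /\
  exists c1 c2 c3 c4 : R, forall x y z,
    V1 x y z = c1 * cos (sqrt k * y) + c2 * sin (sqrt k * y) /\
    V2 x y z = k1 * (Derive f2 x / (f2 x) ^ 2)
                 * (/ sqrt k * (c1 * sin (sqrt k * y) - c2 * cos (sqrt k * y)) + c3)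
               + (c3 * k * F0 x + c4) / f2 x /\
    V3 x y z = c3.

Definition killing_case_v (k1 : R) (f2 F0 : R -> R) (V1 V2 V3 : fn3) : Prop :=
  exists k : R, k < 0 /\
  (forall x, k1 ^ 2 / (f2 x) ^ 2 * Derive (fun t => Derive f2 t / f2 t) x = k) /\
  exists c1 c2 c3 c4 : R, forall x y z,
    V1 x y z = c1 * exp (sqrt (- k) * y) + c2 * exp (- (sqrt (- k) * y)) /\
    V2 x y z = k1 * (Derive f2 x / (f2 x) ^ 2)
                 * (/ sqrt (- k) * (c1 * exp (sqrt (- k) * y) - c2 * exp (- (sqrt (- k) * y))) + c3)
               + (c3 * k * F0 x + c4) / f2 x /\
    V3 x y z = c3.

Definition killing_cases (k1 k3 : R) (f2 F0 : R -> R) (V1 V2 V3 : fn3) : Prop :=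
  killing_case_i f2 V1 V2 V3 \/ killing_case_ii k1 k3 f2 V1 V2 V3 \/
  killing_case_iii k1 f2 F0 V1 V2 V3 \/ killing_case_iv k1 f2 F0 V1 V2 V3 \/
  killing_case_v k1 f2 F0 V1 V2 V3.

Lemma fn3_ext (V W : fn3) : (forall x y z, V x y z = W x y z) -> V = W.
Proof.
  intros H. extensionality x. extensionality y. extensionality z. apply H.
Qed.

(* Eta-expanded unknowns such as [fun t => f2 t] are skipped: [auto_derive] cannot compute them. *)
Ltac compute_Derives side :=
  repeat match goal with
  |- context [Derive ?f ?x] =>
    lazymatch f with
    | (fun t => ?g t) => fail
    | (fun _ => _) => idtac
    end;
    let H := fresh in
    eassert (H : is_derive f x _) by (auto_derive; [side | reflexivity]);
    rewrite (is_derive_unique _ _ _ H); clear H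
  end.

Lemma killing_case_i_system (k1 k3 : R) (f2 : R -> R) (V1 V2 V3 : fn3) :
  k1 <> 0 -> k3 <> 0 -> (forall x, ex_derive f2 x) -> (forall x, f2 x <> 0) ->
  killing_case_i f2 V1 V2 V3 -> killing_system k1 k3 f2 V1 V2 V3.
Proof.
  intros Hk1 Hk3 Hf2 Hnz [c1 [c2 H]].
  rewrite (fn3_ext V1 _ (fun x y z => proj1 (H x y z))),
    (fn3_ext V2 _ (fun x y z => proj1 (proj2 (H x y z)))),
    (fn3_ext V3 _ (fun x y z => proj2 (proj2 (H x y z)))).
  constructor; intros x y z; compute_Derives derive_side; pose proof (Hnz x); field; auto.
Qed.

Lemma killing_case_ii_system (k1 k3 : R) (f2 : R -> R) (V1 V2 V3 : fn3) :
  k1 <> 0 -> k3 <> 0 -> (forall x, f2 x <> 0) ->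
  killing_case_ii k1 k3 f2 V1 V2 V3 -> killing_system k1 k3 f2 V1 V2 V3.
Proof.
  intros Hk1 Hk3 Hnz [k2 [Hf2 [c1 [c2 [c3 [c4 [c5 [c6 H]]]]]]]].
  assert (Hk2 : k2 <> 0) by (rewrite <- (Hf2 0); auto).
  replace f2 with (fun _ : R => k2) by (extensionality x; auto).
  rewrite (fn3_ext V1 _ (fun x y z => proj1 (H x y z))),
    (fn3_ext V2 _ (fun x y z => proj1 (proj2 (H x y z)))),
    (fn3_ext V3 _ (fun x y z => proj2 (proj2 (H x y z)))).
  constructor; intros x y z; compute_Derives derive_side; field; auto.
Qed.

Lemma killing_case_iii_system (k1 k3 : R) (f2 F0 : R -> R) (V1 V2 V3 : fn3) :
  k1 <> 0 -> k3 <> 0 -> (forall x, is_derive F0 x (- (f2 x) ^ 2 / k1)) ->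
  killing_case_iii k1 f2 F0 V1 V2 V3 -> killing_system k1 k3 f2 V1 V2 V3.
Proof.
  intros Hk1 Hk3 HF0 [a1 [a2 [Ha1 [Ha2 [Hf2 [c1 [c2 [c3 [c4 H]]]]]]]]].
  assert (Hnz : forall t, f2 t <> 0).
  { intros t. rewrite Hf2. pose proof (exp_pos (a2 * t)). neq0. }
  assert (Hf2d : forall t, is_derive f2 t (a2 * f2 t)).
  { intros t. apply (is_derive_ext (fun t => a1 * exp (a2 * t))); [auto |].
    auto_derive; [exact I | rewrite Hf2; as_R_eq; ring]. }
  assert (Hdf2 : forall t, Derive f2 t = a2 * f2 t) by (intros t; apply is_derive_unique, Hf2d).
  rewrite (fn3_ext V1 _ (fun x y z => proj1 (H x y z))),
    (fn3_ext V3 _ (fun x y z => proj2 (proj2 (H x y z)))).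
  rewrite (fn3_ext V2 (fun x y _ => k1 * (a2 * f2 x / f2 x ^ 2) * (c1 / 2 * y ^ 2 + c2 * y + c3)
                                    + (c1 * F0 x + c4) / f2 x))
    by (intros x y z; rewrite <- Hdf2; apply H).
  constructor; intros x y z; compute_Derives derive_side; as_R_eq;
    rewrite ?Hdf2, ?(is_derive_unique _ _ _ (HF0 x)); pose proof (Hnz x); field; auto.
Qed.

Lemma Derive2_of_k_function (k1 k : R) (f2 : R -> R) :
  k1 <> 0 -> (forall x, ex_derive f2 x) -> (forall x, ex_derive (Derive f2) x) ->
  (forall x, f2 x <> 0) ->
  (forall x, k1 ^ 2 / (f2 x) ^ 2 * Derive (fun t => Derive f2 t / f2 t) x = k) ->
  forall x, Derive (Derive f2) x = (k * f2 x ^ 4 / k1 ^ 2 + Derive f2 x ^ 2) / f2 x.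
Proof.
  intros Hk1 Hf2 Hf2' Hnz Hkconst x. pose proof (Hkconst x) as E.
  revert E. compute_Derives derive_side. intros E. rewrite <- E. as_R_eq. field. auto.
Qed.

Lemma killing_case_iv_system (k1 k3 : R) (f2 F0 : R -> R) (V1 V2 V3 : fn3) :
  k1 <> 0 -> k3 <> 0 -> (forall x, ex_derive f2 x) -> (forall x, ex_derive (Derive f2) x) ->
  (forall x, f2 x <> 0) -> (forall x, is_derive F0 x (- (f2 x) ^ 2 / k1)) ->
  killing_case_iv k1 f2 F0 V1 V2 V3 -> killing_system k1 k3 f2 V1 V2 V3.
Proof.
  intros Hk1 Hk3 Hf2 Hf2' Hnz HF0 [k [Hk [Hkconst [c1 [c2 [c3 [c4 H]]]]]]].
  pose proof (Derive2_of_k_function k1 k f2 Hk1 Hf2 Hf2' Hnz Hkconst) as Hdd.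
  rewrite (fn3_ext V1 _ (fun x y z => proj1 (H x y z))),
    (fn3_ext V2 _ (fun x y z => proj1 (proj2 (H x y z)))),
    (fn3_ext V3 _ (fun x y z => proj2 (proj2 (H x y z)))).
  assert (Hs : sqrt k * sqrt k = k) by (apply sqrt_sqrt; lra).
  assert (Hs0 : 0 < sqrt k) by (apply sqrt_lt_R0; lra).
  set (s := sqrt k) in *. clearbody s. subst k.
  constructor; intros x y z; compute_Derives derive_side; as_R_eq;
    rewrite ?Hdd, ?(is_derive_unique _ _ _ (HF0 x)); pose proof (Hnz x); field; lra.
Qed.

Lemma killing_case_v_system (k1 k3 : R) (f2 F0 : R -> R) (V1 V2 V3 : fn3) :
  k1 <> 0 -> k3 <> 0 -> (forall x, ex_derive f2 x) -> (forall x, ex_derive (Derive f2) x) ->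
  (forall x, f2 x <> 0) -> (forall x, is_derive F0 x (- (f2 x) ^ 2 / k1)) ->
  killing_case_v k1 f2 F0 V1 V2 V3 -> killing_system k1 k3 f2 V1 V2 V3.
Proof.
  intros Hk1 Hk3 Hf2 Hf2' Hnz HF0 [k [Hk [Hkconst [c1 [c2 [c3 [c4 H]]]]]]].
  pose proof (Derive2_of_k_function k1 k f2 Hk1 Hf2 Hf2' Hnz Hkconst) as Hdd.
  rewrite (fn3_ext V1 _ (fun x y z => proj1 (H x y z))),
    (fn3_ext V2 _ (fun x y z => proj1 (proj2 (H x y z)))),
    (fn3_ext V3 _ (fun x y z => proj2 (proj2 (H x y z)))).
  assert (Hs : sqrt (- k) * sqrt (- k) = - k) by (apply sqrt_sqrt; lra).
  assert (Hs0 : 0 < sqrt (- k)) by (apply sqrt_lt_R0; lra).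
  set (s := sqrt (- k)) in *. clearbody s. replace k with (- (s * s)) in * by lra.
  constructor; intros x y z; compute_Derives derive_side; as_R_eq;
    rewrite ?Hdd, ?(is_derive_unique _ _ _ (HF0 x)); pose proof (Hnz x);
    pose proof (exp_pos (s * y)); pose proof (exp_pos (- (s * y))); field; lra.
Qed.

Section ReducedSystem.

Variables (k1 : R) (f2 F0 g : R -> R) (W : R -> R -> R) (x1 : R).
Hypotheses (Hk1 : k1 <> 0) (Hf2 : forall x, ex_derive f2 x)
  (Hf2' : forall x, ex_derive (Derive f2) x) (Hf2nz : forall x, f2 x <> 0)
  (HF0 : forall x, is_derive F0 x (- (f2 x) ^ 2 / k1)).
Hypotheses (Hg : forall y, ex_derive g y)
  (HWy : forall x y, is_derive (W x) y (k1 * g y * Derive f2 x / f2 x ^ 2))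
  (HWx : forall x y, is_derive (fun t => f2 t * W t y) x (- (f2 x ^ 2 / k1) * Derive g y))
  (Hx1 : Derive f2 x1 <> 0).

(* The primitive of [g] vanishing at 0, read off from [W x1], whose y-derivative is
   [g] times the nonzero factor [k1 * Derive f2 x1 / f2 x1 ^ 2]. *)
Definition G (y : R) : R := (W x1 y - W x1 0) * (f2 x1 ^ 2 / (k1 * Derive f2 x1)).

Lemma G_0 : G 0 = 0.
Proof. unfold G. ring. Qed.

Lemma G_derive y : is_derive G y (g y).
Proof.
  unfold G. auto_derive; [derive_side |].
  as_R_eq. rewrite (is_derive_unique _ _ _ (HWy x1 y)). field. split; auto.
Qed.

Lemma W_split x y : W x y = k1 * (Derive f2 x / f2 x ^ 2) * G y + W x 0.
Proof.
  assert (HG : forall t, is_derive (fun t => k1 * (Derive f2 x / f2 x ^ 2) * G t) t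
                                   (k1 * g t * Derive f2 x / f2 x ^ 2)).
  { intros t. auto_derive; [derive_side; eexists; apply G_derive |].
    as_R_eq. rewrite (is_derive_unique _ _ _ (G_derive t)). field. auto. }
  rewrite (is_derive_same_shift _ _ _ (HWy x) HG y), G_0. ring.
Qed.

Definition log_derive (t : R) : R := Derive f2 t / f2 t.

Definition k_function (x : R) : R := k1 ^ 2 / f2 x ^ 2 * Derive log_derive x.

Lemma ex_derive_log_derive x : ex_derive log_derive x.
Proof. unfold log_derive. auto_derive. repeat split; auto. Qed.

Lemma k_function_times_G x y : k_function x * G y = Derive g 0 - Derive g y.
Proof.
  assert (H : is_derive (fun t => f2 t * W t y) x
                (k1 * Derive log_derive x * G y + - (f2 x ^ 2 / k1) * Derive g 0)).
  { apply (is_derive_ext (fun t => k1 * log_derive t * G y + f2 t * W t 0)).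
    - intros t. rewrite (W_split t y). unfold log_derive. as_R_eq. field. auto.
    - apply (is_derive_plus (fun t => k1 * log_derive t * G y)); [| apply HWx].
      auto_derive; [derive_side; apply ex_derive_log_derive | as_R_eq; ring]. }
  pose proof (is_derive_unique _ _ _ H) as E.
  rewrite (is_derive_unique _ _ _ (HWx x y)) in E.
  unfold k_function. pose proof (Hf2nz x).
  apply (Rmult_eq_reg_l (- (f2 x ^ 2 / k1))); [| neq0].
  transitivity (- (k1 * Derive log_derive x * G y)); [field; auto | lra].
Qed.

Lemma reduced_case_i (c : R) : (forall y, G y = 0) ->
  killing_case_i f2 (fun _ y _ => g y) (fun x y _ => W x y) (fun _ _ _ => c).
Proof.
  intros HG0.
  assert (Hg0 : forall y, g y = 0).
  { intros y. rewrite <- (is_derive_unique _ _ _ (G_derive y)). apply is_derive_unique.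
    apply (is_derive_ext (fun _ => 0)); [intros t; now rewrite HG0 | exact (is_derive_const 0 y)]. }
  assert (Hdg0 : Derive g 0 = 0).
  { rewrite (Derive_ext _ (fun _ => 0)) by apply Hg0. apply Derive_const. }
  assert (Hps : forall x, f2 x * W x 0 = f2 0 * W 0 0).
  { apply (is_derive_0_constant (fun t => f2 t * W t 0)). intros t.
    pose proof (HWx t 0) as H. rewrite Hdg0, Rmult_0_r in H. exact H. }
  exists (f2 0 * W 0 0), c. intros x y z. pose proof (Hf2nz x).
  rewrite W_split, HG0, Hg0, <- (Hps x). repeat split; field; auto.
Qed.

Lemma k_function_constant : (exists y0, G y0 <> 0) -> exists k, forall x, k_function x = k.
Proof.
  intros [y0 Hy0]. exists ((Derive g 0 - Derive g y0) / G y0). intros x.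
  rewrite <- (k_function_times_G x y0). field. exact Hy0.
Qed.

Section ConstantCurvature.

Variable k : R.
Hypothesis Hkconst : forall x, k_function x = k.

Lemma g_second_derive y : is_derive (Derive g) y (- k * g y).
Proof.
  apply (is_derive_ext (fun t => Derive g 0 - k * G t)).
  - intros t. rewrite <- (Hkconst 0), (k_function_times_G 0 t). as_R_eq. ring.
  - auto_derive; [derive_side; eexists; apply G_derive |].
    as_R_eq. rewrite (is_derive_unique _ _ _ (G_derive y)). ring.
Qed.

Lemma W_closed_form : exists C, forall x y,
  W x y = k1 * (Derive f2 x / f2 x ^ 2) * G y + (Derive g 0 * F0 x + C) / f2 x.
Proof.
  assert (HF : forall t, is_derive (fun t => Derive g 0 * F0 t) t (- (f2 t ^ 2 / k1) * Derive g 0)).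
  { intros t. auto_derive; [derive_side |].
    as_R_eq. rewrite (is_derive_unique _ _ _ (HF0 t)). field. auto. }
  set (C := f2 0 * W 0 0 - Derive g 0 * F0 0).
  exists C. intros x y. pose proof (Hf2nz x).
  pose proof (is_derive_same_shift (fun t => f2 t * W t 0) _ _ (fun t => HWx t 0) HF x) as E.
  simpl in E. fold C in E. rewrite W_split. apply Rplus_eq_compat_l.
  apply (Rmult_eq_reg_l (f2 x)); [rewrite E; field; auto | auto].
Qed.

Lemma log_derive_F0_const x : k1 * log_derive x + k * F0 x = k1 * log_derive 0 + k * F0 0.
Proof.
  apply (is_derive_0_constant (fun t => k1 * log_derive t + k * F0 t)). intros t.
  auto_derive; [derive_side; apply ex_derive_log_derive |].
  as_R_eq. rewrite (is_derive_unique _ _ _ (HF0 t)).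
  pose proof (Hkconst t) as Ht. unfold k_function in Ht. pose proof (Hf2nz t).
  replace (Derive log_derive t) with (k * f2 t ^ 2 / k1 ^ 2) by (rewrite <- Ht; field; auto).
  field. auto.
Qed.

(* Any constant [b] can be moved into the [G] factor because [k1 * log_derive + k * F0] is constant. *)
Lemma W_closed_form_k_nonzero : k <> 0 -> forall b, exists c4, forall x y,
  W x y = k1 * (Derive f2 x / f2 x ^ 2) * (b - Derive g y / k) + (b * k * F0 x + c4) / f2 x.
Proof.
  intros Hk b. destruct W_closed_form as [C HW].
  exists (C + (Derive g 0 / k - b) * (k1 * log_derive 0 + k * F0 0)). intros x y.
  rewrite HW, <- (log_derive_F0_const x). pose proof (Hf2nz x).
  replace (G y) with ((Derive g 0 - Derive g y) / k)
    by (rewrite <- (k_function_times_G 0 y), Hkconst; field; auto).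
  unfold log_derive. field. auto.
Qed.

Lemma reduced_case_iii (c : R) : k = 0 ->
  killing_case_iii k1 f2 F0 (fun _ y _ => g y) (fun x y _ => W x y) (fun _ _ _ => c).
Proof.
  intros Hk0. set (a2 := log_derive 0).
  assert (Hlog : forall x, log_derive x = a2).
  { intros x. pose proof (Derive_affine log_derive 0 ex_derive_log_derive) as H.
    rewrite H; [unfold a2; ring |]. intros t. pose proof (Hkconst t) as Ht.
    unfold k_function in Ht. rewrite Hk0 in Ht. pose proof (Hf2nz t).
    apply (Rmult_eq_reg_l (k1 ^ 2 / f2 t ^ 2)); [rewrite Ht; ring | neq0]. }
  assert (Hdf2 : forall t, Derive f2 t = a2 * f2 t).
  { intros t. rewrite <- (Hlog t). unfold log_derive. field. auto. }
  assert (Ha2 : a2 <> 0).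
  { rewrite <- (Hlog x1). unfold log_derive. neq0. }
  assert (Hdg : forall y, Derive g y = Derive g 0).
  { intros y. pose proof (k_function_times_G 0 y) as E. rewrite Hkconst, Hk0 in E. lra. }
  assert (Hg_affine : forall y, g y = Derive g 0 * y + g 0) by (apply Derive_affine; assumption).
  assert (HG_quadratic : forall y, G y = Derive g 0 / 2 * y ^ 2 + g 0 * y).
  { intros y. assert (Hq : forall t, is_derive (fun t => Derive g 0 / 2 * t ^ 2 + g 0 * t) t (g t)).
    { intros t. rewrite (Hg_affine t). auto_derive; [exact I | as_R_eq; field]. }
    rewrite (is_derive_same_shift _ _ _ G_derive Hq y), G_0. ring. }
  destruct W_closed_form as [C HW].
  exists (f2 0), a2. split; [apply Hf2nz |]. split; [exact Ha2 |]. split.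
  { apply is_derive_proportional_exp. intros t. rewrite <- Hdf2. apply Derive_correct, Hf2. }
  exists (Derive g 0), (g 0), c, (C - k1 * a2 * c). intros x y _.
  rewrite HW, HG_quadratic, Hg_affine, Hdf2. pose proof (Hf2nz x). repeat split; field; auto.
Qed.

Lemma reduced_case_iv (c : R) : 0 < k ->
  killing_case_iv k1 f2 F0 (fun _ y _ => g y) (fun x y _ => W x y) (fun _ _ _ => c).
Proof.
  intros Hk. exists k. split; [exact Hk |]. split; [exact Hkconst |].
  destruct (W_closed_form_k_nonzero ltac:(lra) c) as [c4 HW].
  assert (Hs : sqrt k * sqrt k = k) by (apply sqrt_sqrt; lra).
  assert (Hs0 : 0 < sqrt k) by (apply sqrt_lt_R0; lra).
  exists (g 0), (Derive g 0 / sqrt k), c, c4. intros x y _.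
  destruct (oscillator_solution k g (Derive g) Hk (fun y => Derive_correct _ _ (Hg y))
              g_second_derive y) as [Hg_y Hg'_y].
  rewrite HW, Hg'_y, Hg_y. pose proof (Hf2nz x).
  set (s := sqrt k) in *. rewrite <- Hs. repeat split; field; lra.
Qed.

Lemma reduced_case_v (c : R) : k < 0 ->
  killing_case_v k1 f2 F0 (fun _ y _ => g y) (fun x y _ => W x y) (fun _ _ _ => c).
Proof.
  intros Hk. exists k. split; [exact Hk |]. split; [exact Hkconst |].
  destruct (W_closed_form_k_nonzero ltac:(lra) c) as [c4 HW].
  assert (Hs : sqrt (- k) * sqrt (- k) = - k) by (apply sqrt_sqrt; lra).
  assert (Hs0 : 0 < sqrt (- k)) by (apply sqrt_lt_R0; lra).
  pose proof (antioscillator_solution k g (Derive g) Hk (fun y => Derive_correct _ _ (Hg y))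
                g_second_derive) as Hsol.
  cbv zeta in Hsol.
  eexists; eexists; exists c, c4. intros x y _.
  destruct (Hsol y) as [Hg_y Hg'_y].
  rewrite HW, Hg'_y. pose proof (Hf2nz x). split; [exact Hg_y |].
  set (s := sqrt (- k)) in *. replace k with (- (s * s)) at 1 by lra. repeat split; field; lra.
Qed.

End ConstantCurvature.

Lemma reduced_system_cases (c : R) :
  let V1 : fn3 := fun _ y _ => g y in
  let V2 : fn3 := fun x y _ => W x y in
  let V3 : fn3 := fun _ _ _ => c in
  killing_case_i f2 V1 V2 V3 \/ killing_case_iii k1 f2 F0 V1 V2 V3 \/
  killing_case_iv k1 f2 F0 V1 V2 V3 \/ killing_case_v k1 f2 F0 V1 V2 V3.
Proof.
  destruct (classic (exists y0, G y0 <> 0)) as [HG | HG].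
  - destruct (k_function_constant HG) as [k Hk].
    destruct (Rtotal_order k 0) as [Hneg | [Hzero | Hpos]]; right.
    + right; right. now apply (reduced_case_v k).
    + left. now apply (reduced_case_iii k).
    + right; left. now apply (reduced_case_iv k).
  - left. apply reduced_case_i. intros y.
    destruct (Req_dec (G y) 0) as [| Hy]; [assumption | exfalso; eauto].
Qed.

End ReducedSystem.

Section KillingSystemSolutions.

Variables (k1 k3 : R) (f2 : R -> R) (V1 V2 V3 : fn3).
Hypotheses (Hk1 : k1 <> 0) (Hk3 : k3 <> 0).
Hypotheses (Hf2 : forall x, ex_derive f2 x) (Hf2nz : forall x, f2 x <> 0).
Hypotheses (HV1 : forall i x y z, ex_partial i V1 x y z)
  (HV2 : forall i x y z, ex_partial i V2 x y z) (HV3 : forall i x y z, ex_partial i V3 x y z).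
Hypothesis (HK : killing_system k1 k3 f2 V1 V2 V3).

Definition alpha (y : R) : R := Derive (V1 0 y) 0.
Definition gamma (y : R) : R := V1 0 y 0.
Definition beta (y : R) : R := V3 0 y 0.

Lemma V1_indep_x x y z : V1 x y z = V1 0 y z.
Proof.
  pose proof (Derive_affine (fun t => V1 t y z) 0 (fun t => HV1 i1 t y z)
    (fun t => killing11 HK t y z) x) as E.
  simpl in E. lra.
Qed.

Lemma V3_indep_z x y z : V3 x y z = V3 x y 0.
Proof.
  pose proof (Derive_affine (V3 x y) 0 (fun t => HV3 i3 x y t) (fun t => killing33 HK x y t) z).
  lra.
Qed.

Lemma V1_dz_const y z : Derive (V1 0 y) z = alpha y.
Proof.
  unfold alpha. apply (Rmult_eq_reg_l (- (k3 / k1))); [| neq0].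
  rewrite <- (killing13 HK 0 y z), <- (killing13 HK 0 y 0).
  apply Derive_ext. intros t. apply V3_indep_z.
Qed.

Lemma V1_affine x y z : V1 x y z = alpha y * z + gamma y.
Proof.
  rewrite V1_indep_x.
  exact (Derive_affine (V1 0 y) (alpha y) (fun t => HV1 i3 0 y t) (V1_dz_const y) z).
Qed.

Lemma V1_dz x y z : Derive (V1 x y) z = alpha y.
Proof.
  rewrite (Derive_ext _ (fun t => alpha y * t + gamma y)) by apply V1_affine.
  apply is_derive_unique. auto_derive; [exact I | ring].
Qed.

Lemma V3_affine x y z : V3 x y z = - (k3 / k1) * alpha y * x + beta y.
Proof.
  rewrite V3_indep_z. apply (Derive_affine (fun t => V3 t y 0)).
  - intros t. exact (HV3 i1 t y 0).
  - intros t. rewrite (killing13 HK t y 0), V1_dz. ring.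
Qed.

Lemma ex_derive_alpha y : ex_derive alpha y.
Proof.
  apply (ex_derive_ext (fun t => k1 / k3 * (V3 0 t 0 - V3 1 t 0))).
  - intros t. rewrite (V3_affine 1 t 0). unfold beta. as_R_eq. field. split; auto.
  - auto_derive. split; [exact (HV3 i2 0 y 0) | split; [exact (HV3 i2 1 y 0) | exact I]].
Qed.

Lemma V1_dy x y z : Derive (fun t => V1 x t z) y = Derive alpha y * z + Derive gamma y.
Proof.
  rewrite (Derive_ext _ (fun t => alpha t * z + gamma t)) by (intros; apply V1_affine).
  apply is_derive_unique. auto_derive.
  - split; [apply ex_derive_alpha | split; [exact (HV1 i2 0 y 0) | exact I]].
  - as_R_eq. ring.
Qed.

Lemma V3_dy x y z : Derive (fun t => V3 x t z) y = - (k3 / k1) * Derive alpha y * x + Derive beta y.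
Proof.
  rewrite (Derive_ext _ (fun t => - (k3 / k1) * alpha t * x + beta t)) by (intros; apply V3_affine).
  apply is_derive_unique. auto_derive.
  - split; [apply ex_derive_alpha | split; [exact (HV3 i2 0 y 0) | exact I]].
  - as_R_eq. ring.
Qed.

Definition V2_slope_z (x y : R) : R := Derive alpha y * x / k1 - Derive beta y / k3.

Lemma V2_affine x y z : V2 x y z = f2 x * V2_slope_z x y * z + V2 x y 0.
Proof.
  apply (Derive_affine (V2 x y)); [intros t; exact (HV2 i3 x y t) |].
  intros t. rewrite (killing23 HK x y t), V3_dy. unfold V2_slope_z. field. auto.
Qed.

Lemma V2_slope_z_dy x y :
  is_derive (fun t => f2 x * V2_slope_z x t) y (k1 * alpha y * Derive f2 x / f2 x ^ 2).
Proof.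
  apply (is_derive_ext (fun t => V2 x t 1 - V2 x t 0)).
  - intros t. rewrite (V2_affine x t 1). as_R_eq. ring.
  - replace (k1 * alpha y * Derive f2 x / f2 x ^ 2)
      with (Derive (fun t => V2 x t 1) y - Derive (fun t => V2 x t 0) y).
    + apply (is_derive_minus (fun t => V2 x t 1) (fun t => V2 x t 0));
        apply Derive_correct; [exact (HV2 i2 x y 1) | exact (HV2 i2 x y 0)].
    + rewrite (killing22 HK x y 1), (killing22 HK x y 0), !V1_affine. field. auto.
Qed.

Lemma V2_slope_z_dx x y :
  is_derive (fun t => f2 t * (f2 t * V2_slope_z t y)) x (- (f2 x ^ 2 / k1) * Derive alpha y).
Proof.
  apply (is_derive_ext (fun t => f2 t * V2 t y 1 - f2 t * V2 t y 0)).
  - intros t. rewrite (V2_affine t y 1). as_R_eq. ring.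
  - replace (- (f2 x ^ 2 / k1) * Derive alpha y)
      with (Derive (fun t => f2 t * V2 t y 1) x - Derive (fun t => f2 t * V2 t y 0) x).
    + apply (is_derive_minus (fun t => f2 t * V2 t y 1) (fun t => f2 t * V2 t y 0));
        apply Derive_correct; apply ex_derive_mult; auto;
        [exact (HV2 i1 x y 1) | exact (HV2 i1 x y 0)].
    + rewrite (killing12 HK x y 1), (killing12 HK x y 0), !V1_dy. field. auto.
Qed.

Lemma V2_slope_z_coupling x y : Derive f2 x * V2_slope_z x y = - f2 x * Derive alpha y / k1.
Proof.
  assert (Hprod : is_derive (fun t => f2 t * (f2 t * V2_slope_z t y)) x
    (2 * f2 x * (Derive f2 x * V2_slope_z x y) + f2 x ^ 2 * Derive alpha y / k1)).
  { unfold V2_slope_z. auto_derive; [repeat split; auto | as_R_eq; field; auto]. }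
  pose proof (is_derive_unique _ _ _ Hprod) as E.
  rewrite (is_derive_unique _ _ _ (V2_slope_z_dx x y)) in E.
  apply (Rmult_eq_reg_l (2 * f2 x)); [| neq0].
  transitivity (- (f2 x ^ 2 / k1) * Derive alpha y - f2 x ^ 2 * Derive alpha y / k1);
    [lra | field; auto].
Qed.

Lemma alpha_derive_0 y : Derive alpha y = 0.
Proof.
  destruct (Req_dec (Derive alpha y) 0) as [| Hne]; [assumption | exfalso].
  (* [V2_slope_z] is affine in x with slope [Derive alpha y / k1], so it vanishes somewhere *)
  set (x0 := k1 * Derive beta y / (k3 * Derive alpha y)).
  assert (Hr : V2_slope_z x0 y = 0) by (unfold V2_slope_z, x0; field; auto).
  pose proof (V2_slope_z_coupling x0 y) as E. rewrite Hr, Rmult_0_r in E.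
  assert (f2 x0 * Derive alpha y / k1 <> 0) by neq0. lra.
Qed.

Lemma alpha_const y : alpha y = alpha 0.
Proof.
  pose proof (Derive_affine alpha 0 ex_derive_alpha alpha_derive_0 y). lra.
Qed.

Lemma f2_beta_derive x y : Derive f2 x * Derive beta y = 0.
Proof.
  pose proof (V2_slope_z_coupling x y) as E. unfold V2_slope_z in E. rewrite !alpha_derive_0 in E.
  apply (Rmult_eq_reg_l (- / k3)); [| neq0].
  transitivity (Derive f2 x * (0 * x / k1 - Derive beta y / k3));
    [field; auto | rewrite E; field; auto].
Qed.

Lemma ex_derive_beta y : ex_derive beta y.
Proof. exact (HV3 i2 0 y 0). Qed.

Lemma ex_derive_gamma y : ex_derive gamma y.
Proof. exact (HV1 i2 0 y 0). Qed.

Lemma f2_V2_dx_at_z0 x y :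
  is_derive (fun t => f2 t * V2 t y 0) x (- (f2 x ^ 2 / k1) * Derive gamma y).
Proof.
  replace (- (f2 x ^ 2 / k1) * Derive gamma y) with (Derive (fun t => f2 t * V2 t y 0) x).
  - apply Derive_correct, ex_derive_mult; [apply Hf2 | exact (HV2 i1 x y 0)].
  - rewrite (killing12 HK x y 0), V1_dy, alpha_derive_0. ring.
Qed.

Section Flat.

Hypothesis Hflat : forall x, Derive f2 x = 0.

Lemma flat_f2_const x : f2 x = f2 0.
Proof. pose proof (Derive_affine f2 0 Hf2 Hflat x). lra. Qed.

Lemma flat_beta_derive_const y : Derive beta y = Derive beta 0.
Proof.
  assert (Hr : forall t, is_derive (fun t => f2 0 * V2_slope_z 0 t) t 0).
  { intros t. pose proof (V2_slope_z_dy 0 t) as H. rewrite Hflat in H.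
    replace (k1 * alpha t * 0 / f2 0 ^ 2) with 0 in H by (field; auto). exact H. }
  pose proof (is_derive_0_constant _ Hr y) as E. simpl in E. unfold V2_slope_z in E.
  rewrite !alpha_derive_0 in E.
  apply (Rmult_eq_reg_l (- f2 0 / k3)); [| neq0].
  transitivity (f2 0 * (0 * 0 / k1 - Derive beta y / k3)).
  - field. auto.
  - rewrite E. field. auto.
Qed.

Lemma flat_V2_indep_y x y : V2 x y 0 = V2 x 0 0.
Proof.
  pose proof (Derive_affine (fun t => V2 x t 0) 0 (fun t => HV2 i2 x t 0)) as H.
  rewrite H; [ring |]. intros t. rewrite (killing22 HK x t 0), Hflat. field. auto.
Qed.

Lemma flat_gamma_derive_const y : Derive gamma y = Derive gamma 0.
Proof.
  pose proof (killing12 HK 0 y 0) as Ey. pose proof (killing12 HK 0 0 0) as E0.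
  rewrite V1_dy in Ey, E0.
  rewrite (Derive_ext _ (fun t => f2 t * V2 t 0 0)) in Ey by (intros; now rewrite flat_V2_indep_y).
  rewrite Ey in E0. apply (Rmult_eq_reg_l (- (f2 0 ^ 2 / k1))); [| neq0].
  transitivity (- (f2 0 ^ 2 / k1) * (Derive alpha y * 0 + Derive gamma y)); [ring |].
  rewrite E0. ring.
Qed.

Lemma flat_V2_profile x y : V2 x y 0 = - (f2 0 / k1) * Derive gamma 0 * x + V2 0 0 0.
Proof.
  rewrite flat_V2_indep_y. apply (Derive_affine (fun t => V2 t 0 0)).
  - intros t. exact (HV2 i1 t 0 0).
  - intros t. pose proof (killing12 HK t 0 0) as E.
    rewrite (Derive_ext _ (fun s => f2 0 * V2 s 0 0)) in E by (intros; now rewrite flat_f2_const).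
    rewrite Derive_scal, V1_dy, (flat_f2_const t) in E.
    apply (Rmult_eq_reg_l (f2 0)); [| auto]. rewrite E. field. auto.
Qed.

Lemma flat_case_ii : killing_case_ii k1 k3 f2 V1 V2 V3.
Proof.
  exists (f2 0). split; [exact flat_f2_const |].
  exists (Derive gamma 0), (alpha 0), (gamma 0), (Derive beta 0 / k3), (V2 0 0 0), (beta 0).
  intros x y z.
  rewrite V1_affine, V2_affine, flat_V2_profile, V3_affine, alpha_const, flat_f2_const.
  rewrite (Derive_affine gamma _ ex_derive_gamma flat_gamma_derive_const y).
  rewrite (Derive_affine beta _ ex_derive_beta flat_beta_derive_const y).
  unfold V2_slope_z. rewrite alpha_derive_0, flat_beta_derive_const.
  pose proof (Hf2nz 0). repeat split; field; auto.
Qed.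

End Flat.

Section NonFlat.

Variable x1 : R.
Hypothesis Hx1 : Derive f2 x1 <> 0.

Lemma nonflat_beta_derive_0 y : Derive beta y = 0.
Proof.
  pose proof (f2_beta_derive x1 y) as E.
  apply Rmult_integral in E as [E | E]; [contradiction | exact E].
Qed.

Lemma nonflat_V2_slope_z_0 x y : V2_slope_z x y = 0.
Proof. unfold V2_slope_z. rewrite alpha_derive_0, nonflat_beta_derive_0. field. split; auto. Qed.

Lemma nonflat_alpha_0 y : alpha y = 0.
Proof.
  assert (H0 : is_derive (fun t => f2 x1 * V2_slope_z x1 t) y 0).
  { apply (is_derive_ext (fun _ => 0)); [intros t; rewrite nonflat_V2_slope_z_0; as_R_eq; ring |].
    exact (is_derive_const 0 y). }
  pose proof (is_derive_unique _ _ _ (V2_slope_z_dy x1 y)) as E.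
  rewrite (is_derive_unique _ _ _ H0) in E.
  pose proof (Hf2nz x1).
  apply (Rmult_eq_reg_l (k1 * Derive f2 x1 / f2 x1 ^ 2)); [| neq0].
  rewrite Rmult_0_r, E. field. auto.
Qed.

Lemma nonflat_reduction :
  V1 = (fun _ y _ => gamma y) /\ V2 = (fun x y _ => V2 x y 0) /\ V3 = (fun _ _ _ => beta 0).
Proof.
  split; [| split]; extensionality x; extensionality y; extensionality z.
  - rewrite V1_affine, nonflat_alpha_0. ring.
  - rewrite V2_affine, nonflat_V2_slope_z_0. ring.
  - rewrite V3_affine, nonflat_alpha_0,
      (Derive_affine beta 0 ex_derive_beta nonflat_beta_derive_0 y). ring.
Qed.

Lemma nonflat_V2_dy x y :
  is_derive (fun t => V2 x t 0) y (k1 * gamma y * Derive f2 x / f2 x ^ 2).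
Proof.
  replace (k1 * gamma y * Derive f2 x / f2 x ^ 2) with (Derive (fun t => V2 x t 0) y).
  - apply Derive_correct. exact (HV2 i2 x y 0).
  - rewrite (killing22 HK x y 0), V1_affine, nonflat_alpha_0. field. auto.
Qed.

End NonFlat.

Lemma killing_system_cases (F0 : R -> R) :
  (forall x, ex_derive (Derive f2) x) -> (forall x, is_derive F0 x (- (f2 x) ^ 2 / k1)) ->
  killing_cases k1 k3 f2 F0 V1 V2 V3.
Proof.
  intros Hf2' HF0. unfold killing_cases.
  destruct (classic (exists x1, Derive f2 x1 <> 0)) as [[x1 Hx1] | Hflat].
  - destruct (nonflat_reduction x1 Hx1) as (-> & E2 & ->). rewrite E2.
    destruct (reduced_system_cases k1 f2 F0 gamma (fun x y => V2 x y 0) x1 Hk1 Hf2 Hf2' Hf2nz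
      HF0 ex_derive_gamma (nonflat_V2_dy x1 Hx1) f2_V2_dx_at_z0 Hx1 (beta 0));
      tauto.
  - right; left. apply flat_case_ii. intros x.
    destruct (Req_dec (Derive f2 x) 0); [assumption | exfalso; eauto].
Qed.

End KillingSystemSolutions.

Lemma smooth3_ex_partial (V : fn3) : smooth3 V -> forall i x y z, ex_partial i V x y z.
Proof. intros H. exact (proj1 (proj2 (H 1%nat))). Qed.

Theorem mainTheorem11 (k1 k3 : R) (f2 F0 : R -> R) (V1 V2 V3 : fn3) :
  k1 <> 0 -> k3 <> 0 ->
  smooth1 f2 -> (forall x, f2 x <> 0) ->
  (forall x, is_derive F0 x (- (f2 x) ^ 2 / k1)) ->
  smooth3 V1 -> smooth3 V2 -> smooth3 V3 ->
  (Killing (metric_g k1 k3 f2) (frame_field k1 k3 f2 V1 V2 V3) <->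
   (* (i) *)
   (exists c1 c2 : R, forall x y z,
      V1 x y z = 0 /\ V2 x y z = c1 / f2 x /\ V3 x y z = c2)
   \/
   (* (ii) *)
   (exists k2 : R, (forall x, f2 x = k2) /\
    exists c1 c2 c3 c4 c5 c6 : R, forall x y z,
      V1 x y z = c1 * y + c2 * z + c3 /\
      V2 x y z = - (c1 * k2 / k1) * x - c4 * k2 * z + c5 /\
      V3 x y z = - (c2 * k3 / k1) * x + c4 * k3 * y + c6)
   \/
   (* (iii) *)
   (exists a1 a2 : R, a1 <> 0 /\ a2 <> 0 /\ (forall x, f2 x = a1 * exp (a2 * x)) /\
    exists c1 c2 c3 c4 : R, forall x y z,
      V1 x y z = c1 * y + c2 /\
      V2 x y z = k1 * (Derive f2 x / (f2 x) ^ 2) * (c1 / 2 * y ^ 2 + c2 * y + c3)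
                 + (c1 * F0 x + c4) / f2 x /\
      V3 x y z = c3)
   \/
   (* (iv) *)
   (exists k : R, 0 < k /\
    (forall x, k1 ^ 2 / (f2 x) ^ 2 * Derive (fun t => Derive f2 t / f2 t) x = k) /\
    exists c1 c2 c3 c4 : R, forall x y z,
      V1 x y z = c1 * cos (sqrt k * y) + c2 * sin (sqrt k * y) /\
      V2 x y z = k1 * (Derive f2 x / (f2 x) ^ 2)
                   * (/ sqrt k * (c1 * sin (sqrt k * y) - c2 * cos (sqrt k * y)) + c3)
                 + (c3 * k * F0 x + c4) / f2 x /\
      V3 x y z = c3)
   \/
   (* (v) *)
   (exists k : R, k < 0 /\
    (forall x, k1 ^ 2 / (f2 x) ^ 2 * Derive (fun t => Derive f2 t / f2 t) x = k) /\
    exists c1 c2 c3 c4 : R, forall x y z,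
      V1 x y z = c1 * exp (sqrt (- k) * y) + c2 * exp (- (sqrt (- k) * y)) /\
      V2 x y z = k1 * (Derive f2 x / (f2 x) ^ 2)
                   * (/ sqrt (- k) * (c1 * exp (sqrt (- k) * y) - c2 * exp (- (sqrt (- k) * y))) + c3)
                 + (c3 * k * F0 x + c4) / f2 x /\
      V3 x y z = c3)).
Proof.
  intros Hk1 Hk3 Hf2 Hnz HF0 HV1 HV2 HV3.
  assert (Hf2d : forall x, ex_derive f2 x) by exact (Hf2 1%nat).
  assert (Hf2dd : forall x, ex_derive (Derive f2) x) by exact (Hf2 2%nat).
  rewrite (Killing_frame_iff k1 k3 f2 V1 V2 V3 Hk1 Hk3 Hf2d Hnz).
  change (killing_system k1 k3 f2 V1 V2 V3 <-> killing_cases k1 k3 f2 F0 V1 V2 V3).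
  split.
  - intros HK. apply (killing_system_cases k1 k3 f2 V1 V2 V3); auto; apply smooth3_ex_partial; auto.
  - intros [H | [H | [H | [H | H]]]].
    + now apply killing_case_i_system.
    + now apply killing_case_ii_system.
    + now apply (killing_case_iii_system k1 k3 f2 F0).
    + now apply (killing_case_iv_system k1 k3 f2 F0).
    + now apply (killing_case_v_system k1 k3 f2 F0).
Qed.
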